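(* Let $E$ be an arbitrary set and $\mathcal L\subseteq\{+,-,0\}^E$. Then $\mathcal L$ satisfies the four axioms (C) $\mathcal L\circ\mathcal L\subseteq\mathcal L$; (FS) $\mathcal L\circ(-\mathcal L)\subseteq\mathcal L$; (SE$^=$) for all $X,Y\in\mathcal L$ with $\underline X=\underline Y$ and all $e\in S(X,Y)$, $I^=_e(X,Y;\mathcal L)\neq\emptyset$; (P$^=_{\mathrm{asym}}$) $\mathcal P^=_{\mathrm{asym}}(\mathcal L)\circ\mathcal L\subseteq\mathcal L$, if and only if $\mathcal L$ satisfies the three axioms (FS) $\mathcal L\circ(-\mathcal L)\subseteq\mathcal L$; (SE) for all $X,Y\in\mathcal L$ and all $e\in S(X,Y)$, $I_e(X,Y;\mathcal L)\neq\emptyset$; (P) $\mathcal P(\mathcal L)\circ\mathcal L\subseteq\mathcal L$.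
   Context: A sign vector on a set $E$ is an element of $\{+,-,0\}^E$; $-X$ is defined by $(-X)(e)=-X(e)$. The support of $X$ is $\underline X=\{e\in E: X(e)\neq0\}$. The separator of $X,Y$ is $S(X,Y)=\{e\in E: X(e)\neq0\neq Y(e),\ X(e)\neq Y(e)\}$. The composition $X\circ Y$ is given by $(X\circ Y)(e)=X(e)$ if $X(e)\neq0$ and $(X\circ Y)(e)=Y(e)$ otherwise. The sign vector $X\oplus Y$ is $0$ on $S(X,Y)$ and equals $X\circ Y$ elsewhere. For sets $\mathcal A,\mathcal B$ of sign vectors, $\mathcal A\circ\mathcal B=\{X\circ Y:X\in\mathcal A,Y\in\mathcal B\}$ and $-\mathcal A=\{-X:X\in\mathcal A\}$. For $\mathcal L\subseteq\{+,-,0\}^E$, sign vectors $X,Y$ and $e\in E$ put $I_e(X,Y;\mathcal L)=\{Z\in\mathcal L: Z(e)=0,\ Z(f)=(X\circ Y)(f)\ \forall f\notin S(X,Y)\}$, $I(X,Y;\mathcal L)=\bigcup_{e\in S(X,Y)}I_e(X,Y;\mathcal L)$, $I^=_e(X,Y;\mathcal L)=\{Z\in\mathcal L: Z(e)=0,\ Z(f)=X(f)\ \forall f\notin S(X,Y)\}$, $I^=(X,Y;\mathcal L)=\bigcup_{e\in S(X,Y)}I^=_e(X,Y;\mathcal L)$, $\mathrm{Asym}(\mathcal L)=\{X\in\mathcal L:-X\notin\mathcal L\}$, $\mathcal P^=_{\mathrm{asym}}(\mathcal L)=\{X\oplus(-Y): X,Y\in\mathrm{Asym}(\mathcal L),\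 \underline X=\underline Y,\ I^=(X,-Y;\mathcal L)=I^=(-X,Y;\mathcal L)=\emptyset\}$, $\mathcal P(\mathcal L)=\{X\oplus(-Y): X,Y\in\mathcal L,\ I(X,-Y;\mathcal L)=I(-X,Y;\mathcal L)=\emptyset\}$. *)

Inductive sign : Type := Pl | Mi | Ze.

Definition sv (E : Type) := E -> sign.

Definition sneg (s : sign) : sign :=
  match s with Pl => Mi | Mi => Pl | Ze => Ze end.

Definition negv {E : Type} (X : sv E) : sv E := fun e => sneg (X e).

Definition comp {E : Type} (X Y : sv E) : sv E :=
  fun e => match X e with Ze => Y e | s => s end.

Definition in_supp {E : Type} (X : sv E) (e : E) : Prop := X e <> Ze.

Definition same_supp {E : Type} (X Y : sv E) : Prop :=
  forall e, in_supp X e <-> in_supp Y e.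

Definition sep {E : Type} (X Y : sv E) (e : E) : Prop :=
  X e <> Ze /\ Y e <> Ze /\ X e <> Y e.

Definition sep_dec (a b : sign) : bool :=
  match a, b with
  | Pl, Mi | Mi, Pl => true
  | _, _ => false
  end.

Definition oplus {E : Type} (X Y : sv E) : sv E :=
  fun e => if sep_dec (X e) (Y e) then Ze else comp X Y e.

Definition SVset (E : Type) := sv E -> Prop.

Definition In_Ie {E : Type} (L : SVset E) (X Y : sv E) (e : E) (Z : sv E) : Prop :=
  L Z /\ Z e = Ze /\ forall f, ~ sep X Y f -> Z f = comp X Y f.

Definition In_I {E : Type} (L : SVset E) (X Y : sv E) (Z : sv E) : Prop :=
  exists e, sep X Y e /\ In_Ie L X Y e Z.

Definition In_Ie_eq {E : Type} (L : SVset E) (X Y : sv E) (e : E) (Z : sv E) : Prop :=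
  L Z /\ Z e = Ze /\ forall f, ~ sep X Y f -> Z f = X f.

Definition In_I_eq {E : Type} (L : SVset E) (X Y : sv E) (Z : sv E) : Prop :=
  exists e, sep X Y e /\ In_Ie_eq L X Y e Z.

Definition Asym {E : Type} (L : SVset E) : SVset E :=
  fun X => L X /\ ~ L (negv X).

Definition P_asym_eq {E : Type} (L : SVset E) : SVset E :=
  fun W => exists X Y, Asym L X /\ Asym L Y /\ same_supp X Y /\
    (forall Z, ~ In_I_eq L X (negv Y) Z) /\
    (forall Z, ~ In_I_eq L (negv X) Y Z) /\
    W = oplus X (negv Y).

Definition P_set {E : Type} (L : SVset E) : SVset E :=
  fun W => exists X Y, L X /\ L Y /\
    (forall Z, ~ In_I L X (negv Y) Z) /\
    (forall Z, ~ In_I L (negv X) Y Z) /\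
    W = oplus X (negv Y).

Definition ax_C {E : Type} (L : SVset E) : Prop :=
  forall X Y, L X -> L Y -> L (comp X Y).

Definition ax_FS {E : Type} (L : SVset E) : Prop :=
  forall X Y, L X -> L Y -> L (comp X (negv Y)).

Definition ax_SE_eq {E : Type} (L : SVset E) : Prop :=
  forall X Y, L X -> L Y -> same_supp X Y ->
    forall e, sep X Y e -> exists Z, In_Ie_eq L X Y e Z.

Definition ax_SE {E : Type} (L : SVset E) : Prop :=
  forall X Y, L X -> L Y ->
    forall e, sep X Y e -> exists Z, In_Ie L X Y e Z.

Definition ax_P_asym_eq {E : Type} (L : SVset E) : Prop :=
  forall W Z, P_asym_eq L W -> L Z -> L (comp W Z).

Definition ax_P {E : Type} (L : SVset E) : Prop :=
  forall W Z, P_set L W -> L Z -> L (comp W Z).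

From Stdlib Require Import Classical FunctionalExtensionality.

(* Two observations carry the whole argument.
   (1) If supp X = supp Y then X o Y = X, so I^=_e(X,Y) = I_e(X,Y).  This
       makes (SE^=) and (P^=_asym) special cases of (SE) and (P).
   (2) For arbitrary X, Y the "swapped pair" (X o Y, Y o X) has equal
       supports, the same separator as (X,Y), the same X (+) Y, and
       I^=_e(X o Y, Y o X) = I_e(X,Y).  Applying (SE^=) to this pair yields
       (SE); and, for Z = X (+) (-Y) in P(L) with S(X,-Y) nonempty, the pair
       (X o -Y, Y o -X) is a pair of asymmetric vectors witnessing
       Z in P^=_asym(L) (asymmetry again by (SE^=) and observation (2)).
       If S(X,-Y) is empty then Z = X o -Y and (C) suffices.
   Finally (C) follows from (FS) since X o Y = X o -(X o -Y). *)

Ltac sign_cases f :=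
  unfold same_supp, in_supp, sep, oplus, comp, negv in *;
  repeat match goal with
         | X : sv _ |- _ => revert X
         end;
  intros;
  repeat match goal with
         | |- context [?X f] =>
             is_var X; let s := fresh "s" in destruct (X f) as [| |] eqn:s
         end;
  simpl in *; intuition congruence.

Section SignVectors.
Context {E : Type}.
Implicit Types X Y : sv E.

Lemma negv_involutive X : negv (negv X) = X.
Proof.
  apply functional_extensionality; intro f; unfold negv; now destruct (X f).
Qed.

Lemma negv_comp X Y : negv (comp X Y) = comp (negv X) (negv Y).
Proof.
  apply functional_extensionality; intro f; unfold negv, comp.
  now destruct (X f).
Qed.

Lemma same_supp_negv_r X Y : same_supp X Y -> same_supp X (negv Y).
Proof. intros H f; specialize (H f); sign_cases f. Qed.

Lemma comp_same_supp X Y f : same_supp X Y -> comp X Y f = X f.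
Proof. intros H; specialize (H f); sign_cases f. Qed.

Lemma same_supp_comp_swap X Y : same_supp (comp X Y) (comp Y X).
Proof. intro f; sign_cases f. Qed.

Lemma sep_comp_swap X Y f : sep (comp X Y) (comp Y X) f <-> sep X Y f.
Proof. sign_cases f. Qed.

Lemma oplus_comp_swap X Y : oplus (comp X Y) (comp Y X) = oplus X Y.
Proof. apply functional_extensionality; intro f; sign_cases f. Qed.

Lemma oplus_no_sep X Y : (forall f, ~ sep X Y f) -> oplus X Y = comp X Y.
Proof.
  intro H; apply functional_extensionality; intro f; specialize (H f).
  sign_cases f.
Qed.

Lemma comp_as_comp_negv X Y : comp X Y = comp X (negv (comp X (negv Y))).
Proof. apply functional_extensionality; intro f; sign_cases f. Qed.

Lemma In_Ie_eq_same_supp (L : SVset E) X Y e Z :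
  same_supp X Y -> (In_Ie_eq L X Y e Z <-> In_Ie L X Y e Z).
Proof.
  intro H; unfold In_Ie_eq, In_Ie.
  split; intros (LZ & Ze & HZ); repeat split; auto;
    intros f nf; rewrite (HZ f nf), (comp_same_supp X Y f H); reflexivity.
Qed.

Lemma In_I_eq_same_supp (L : SVset E) X Y Z :
  same_supp X Y -> (In_I_eq L X Y Z <-> In_I L X Y Z).
Proof.
  intro H; unfold In_I_eq, In_I.
  split; intros (e & Se & HZ); exists e; split; auto;
    apply (In_Ie_eq_same_supp L X Y e Z H); exact HZ.
Qed.

Lemma In_Ie_eq_comp_swap (L : SVset E) X Y e Z :
  In_Ie_eq L (comp X Y) (comp Y X) e Z <-> In_Ie L X Y e Z.
Proof.
  unfold In_Ie_eq, In_Ie.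
  split; intros (LZ & Ze & HZ); repeat split; auto;
    intros f nf; apply HZ; rewrite sep_comp_swap in *; exact nf.
Qed.

Lemma In_I_eq_comp_swap (L : SVset E) X Y Z :
  In_I_eq L (comp X Y) (comp Y X) Z <-> In_I L X Y Z.
Proof.
  unfold In_I_eq, In_I.
  split; intros (e & Se & HZ); exists e;
    rewrite sep_comp_swap, In_Ie_eq_comp_swap in *; auto.
Qed.

End SignVectors.

Section AxiomSystems.
Context {E : Type}.
Variable L : SVset E.
Implicit Types X Y : sv E.

Lemma C_of_FS : ax_FS L -> ax_C L.
Proof.
  intros HFS X Y LX LY; rewrite comp_as_comp_negv; auto.
Qed.

Lemma SE_eq_of_SE : ax_SE L -> ax_SE_eq L.
Proof.
  intros HSE X Y LX LY ss e Se.
  destruct (HSE X Y LX LY e Se) as [Z HZ]; exists Z.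
  now apply In_Ie_eq_same_supp.
Qed.

(* (P) implies (P^=_asym), by observation (1) applied to both pairs
   (X, -Y) and (-X, Y), which have equal supports. *)
Lemma P_asym_eq_of_P : ax_P L -> ax_P_asym_eq L.
Proof.
  intros HP W Z (X & Y & [LX _] & [LY _] & ss & nI1 & nI2 & ->) LZ.
  apply HP; auto; exists X, Y; repeat split; auto.
  - intros U HU; apply (nI1 U).
    apply In_I_eq_same_supp; auto using same_supp_negv_r.
  - intros U HU; apply (nI2 U).
    apply In_I_eq_same_supp; auto.
    intro f; specialize (ss f); sign_cases f.
Qed.

(* (C) and (SE^=) imply (SE): apply (SE^=) to the swapped pair. *)
Lemma SE_of_SE_eq : ax_C L -> ax_SE_eq L -> ax_SE L.
Proof.
  intros HC HSE X Y LX LY e Se.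
  destruct (HSE (comp X Y) (comp Y X)) with (e := e) as [Z HZ];
    auto using same_supp_comp_swap.
  - now apply sep_comp_swap.
  - exists Z; now apply In_Ie_eq_comp_swap in HZ.
Qed.

(* Under (SE^=), if S(X,Y) is nonempty and I(X,Y) is empty, the swapped
   pair cannot lie in L: otherwise (SE^=) produces an element of I(X,Y).
   This is what makes the vectors built below asymmetric. *)
Lemma comp_swap_not_both (X Y : sv E) e :
  ax_SE_eq L -> sep X Y e -> (forall Z, ~ In_I L X Y Z) ->
  ~ (L (comp X Y) /\ L (comp Y X)).
Proof.
  intros HSE Se nI [L1 L2].
  destruct (HSE _ _ L1 L2 (same_supp_comp_swap X Y) e) as [Z HZ].
  - now apply sep_comp_swap.
  - apply (nI Z); exists e; split; auto.
    now apply In_Ie_eq_comp_swap.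
Qed.

Lemma P_set_in_P_asym_eq (X Y : sv E) e :
  ax_FS L -> ax_SE_eq L -> L X -> L Y -> sep X (negv Y) e ->
  (forall Z, ~ In_I L X (negv Y) Z) -> (forall Z, ~ In_I L (negv X) Y Z) ->
  P_asym_eq L (oplus X (negv Y)).
Proof.
  intros HFS HSE LX LY Se nI1 nI2.
  assert (negX' : negv (comp X (negv Y)) = comp (negv X) Y)
    by now rewrite negv_comp, negv_involutive.
  assert (negY' : negv (comp Y (negv X)) = comp (negv Y) X)
    by now rewrite negv_comp, negv_involutive.
  assert (Se' : sep (negv X) Y e) by (revert Se; sign_cases e).
  assert (LX' : L (comp X (negv Y))) by auto.
  assert (LY' : L (comp Y (negv X))) by auto.
  assert (ss : same_supp (comp X (negv Y)) (comp Y (negv X))).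
  { intro f; pose proof (same_supp_comp_swap X (negv Y) f) as H.
    rewrite <- negY' in H; revert H; sign_cases f. }
  exists (comp X (negv Y)), (comp Y (negv X)); unfold Asym.
  rewrite negX', negY', oplus_comp_swap.
  refine (conj (conj LX' _) (conj (conj LY' _)
                 (conj ss (conj _ (conj _ eq_refl))))).
  - intro H; apply (comp_swap_not_both (negv X) Y e); auto.
  - intro H; apply (comp_swap_not_both X (negv Y) e); auto.
  - intros Z HZ; apply (nI1 Z); now apply In_I_eq_comp_swap.
  - intros Z HZ; apply (nI2 Z); now apply In_I_eq_comp_swap.
Qed.

Lemma P_of_P_asym_eq :
  ax_C L -> ax_FS L -> ax_SE_eq L -> ax_P_asym_eq L -> ax_P L.
Proof.
  intros HC HFS HSE HP W Z HW LZ.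
  destruct HW as (X & Y & LX & LY & nI1 & nI2 & ->).
  destruct (classic (exists e, sep X (negv Y) e)) as [[e Se] | nS].
  - apply HP; auto; eapply P_set_in_P_asym_eq; eauto.
  - rewrite oplus_no_sep by (intros f Sf; apply nS; now exists f).
    auto.
Qed.

End AxiomSystems.

Theorem proposition2p2 (E : Type) (L : SVset E) :
  (ax_C L /\ ax_FS L /\ ax_SE_eq L /\ ax_P_asym_eq L) <->
  (ax_FS L /\ ax_SE L /\ ax_P L).
Proof.
  split.
  - intros (HC & HFS & HSE & HP).
    split; [exact HFS | split].
    + exact (SE_of_SE_eq L HC HSE).
    + exact (P_of_P_asym_eq L HC HFS HSE HP).
  - intros (HFS & HSE & HP).
    repeat split.
    + exact (C_of_FS L HFS).
    + exact HFS.
    + exact (SE_eq_of_SE L HSE).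
    + exact (P_asym_eq_of_P L HP).
Qed.
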